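(* For every $n\ge4$ and $2\le k\le n-2$, $\rho_{n,k}(\gamma):=\mathcal E_\gamma^{\otimes n}(|D_n^k\rangle\langle D_n^k|)\notin\mathcal S$ for all $0\le\gamma<1$, while $\rho_{n,k}(1)=|0^n\rangle\langle0^n|\in\mathcal S$.
   Context: $|D_n^k\rangle=\binom nk^{-1/2}\sum_{x\in\{0,1\}^n,|x|=k}|x\rangle$ is the Dicke state ($|x|$ the Hamming weight). $\mathcal E_\gamma$ is single-qubit amplitude damping with Kraus operators $|0\rangle\langle0|+\sqrt{1-\gamma}|1\rangle\langle1|$ and $\sqrt\gamma|0\rangle\langle1|$. $\mathcal S$ is the $n$-qubit stabilizer polytope (convex hull of pure stabilizer states $C|0^n\rangle$, $C$ Clifford). *)

From mathcomp Require Import all_boot all_algebra.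
From mathcomp Require Import reals.
From mathcomp Require Export complex.
Set Implicit Arguments. Unset Strict Implicit. Unset Printing Implicit Defensive.
Import GRing.Theory Num.Theory.
Local Open Scope ring_scope.

Section QInfo.
Variable R : realType.
Local Notation C := R[i].

Definition cR (r : R) : C := Complex r 0.
Definition cc (z : C) : C := conjc z.
Definition iC : C := Complex 0 1.

(* computational basis of n qubits: bit strings x : 'I_n -> bool *)
Definition bits (n : nat) := {ffun 'I_n -> bool}.

(* operators on (C^2)^{\otimes n}, given by their matrix entries <x|A|y> *)
Definition op (n : nat) := bits n -> bits n -> C.
Definition ket (n : nat) := bits n -> C.

Definition proj n (psi : ket n) : op n := fun x y => psi x * cc (psi y).

Definition hweight n (x : bits n) : nat := #|[set i | x i]|.

Definition dicke (n k : nat) : ket n :=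
  fun x => if hweight x == k then cR (Num.sqrt ('C(n, k)%:R)^-1) else 0.
Arguments dicke : clear implicits.

Definition zeros n : bits n := [ffun => false].
Arguments zeros : clear implicits.
Definition basis_ket n (z : bits n) : ket n := fun x => if x == z then 1 else 0.

(* amplitude damping Kraus operators (single qubit, entry <a|K|b>, false = 0):
   K0 = |0><0| + sqrt(1-g)|1><1|,  K1 = sqrt(g) |0><1| *)
Definition ad_K0 (g : R) (a b : bool) : C :=
  match a, b with
  | false, false => 1
  | true, true => cR (Num.sqrt (1 - g))
  | _, _ => 0
  end.
Definition ad_K1 (g : R) (a b : bool) : C :=
  match a, b with
  | false, true => cR (Num.sqrt g)
  | _, _ => 0
  end.
Definition ad_kraus (g : R) (j : bool) : bool -> bool -> C :=
  if j then ad_K1 g else ad_K0 g.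

Definition ad_kraus_n n (g : R) (j : bits n) : op n :=
  fun x y => \prod_(i < n) ad_kraus g (j i) (x i) (y i).

Definition ad_channel_n n (g : R) (rho : op n) : op n :=
  fun x y => \sum_(j : bits n) \sum_(u : bits n) \sum_(v : bits n)
     ad_kraus_n g j x u * rho u v * cc (ad_kraus_n g j y v).

Definition rho_nk (n k : nat) (g : R) : op n := ad_channel_n g (proj (dicke n k)).

(* single-qubit Paulis I, X, Y, Z indexed by 'I_4 *)
Definition pauli1 (p : 'I_4) (a b : bool) : C :=
  match val p with
  | 0 => if a == b then 1 else 0
  | 1 => if a != b then 1 else 0
  | 2 => if a == b then 0 else (if b then - iC else iC)
  | _ => if a == b then (if a then -1 else 1) else 0
  end.

Definition pauli_string n (p : {ffun 'I_n -> 'I_4}) : op n :=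
  fun x y => \prod_(i < n) pauli1 (p i) (x i) (y i).

Definition op_mul n (A B : op n) : op n := fun x y => \sum_(z : bits n) A x z * B z y.
Definition op_adj n (A : op n) : op n := fun x y => cc (A y x).
Definition op_id n : op n := fun x y => if x == y then 1 else 0.
Arguments op_id : clear implicits.

Definition unitary n (U : op n) : Prop := op_mul U (op_adj U) = op_id n.

Definition clifford n (U : op n) : Prop :=
  unitary U /\
  forall p : {ffun 'I_n -> 'I_4}, exists (q : {ffun 'I_n -> 'I_4}) (m : 'I_4),
    op_mul (op_mul U (pauli_string p)) (op_adj U)
    = (fun x y => iC ^+ m * pauli_string q x y).

Definition stab_ket n (U : op n) : ket n := fun x => U x (zeros n).

Definition stab_polytope n (rho : op n) : Prop :=
  exists (m : nat) (w : 'I_m -> R) (U : 'I_m -> op n),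
    (forall j, 0 <= w j) /\ \sum_(j < m) w j = 1 /\
    (forall j, clifford (U j)) /\
    rho = (fun x y => \sum_(j < m) cR (w j) * proj (stab_ket (U j)) x y).

End QInfo.
Arguments rho_nk {R} n k g _ _.
Arguments basis_ket {R n} z _.
Arguments proj {R n} psi _ _.

From mathcomp Require Import all_boot all_algebra.
From mathcomp Require Import reals complex.
From mathcomp Require Import ring zify.
From Stdlib Require Import FunctionalExtensionality.
Import GRing.Theory Num.Theory.
Local Open Scope ring_scope.
Set Implicit Arguments. Unset Strict Implicit.

(* Amplitude damping never raises the Hamming weight, so rho_{n,k}(g) vanishes on
   the diagonal above weight k, while all its entries on the weight-k block equal
   (1 - g)^k / C(n, k), which is nonzero for g < 1.  In a decomposition
   rho = sum_j w_j |s_j><s_j| with w_j > 0, every s_j therefore vanishes above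
   weight k and is constant on the weight-k strings, and some s_j is nonzero there.
   But the support of a stabilizer state U|0> is closed under x + y + z: the
   Z-strings sum to 2^n |0><0|, so some U Z_f U^dagger, a Pauli string up to a
   phase, links x to y, and it fixes U|0>.  Three weight-k strings whose sum has
   weight k + 2, which exist when 2 <= k <= n - 2, give a contradiction.
   At g = 1 every qubit is reset to |0>. *)

Lemma sumr_delta (R : nzRingType) (T : finType) (F : T -> R) (c : T) :
  \sum_a F a * (if a == c then 1 else 0) = F c.
Proof.
rewrite (bigD1 c) //= eqxx mulr1 big1 ?addr0 // => a /negPf ->.
by rewrite mulr0.
Qed.

Lemma cR_eq0 (R : realType) (r : R) : (cR r == 0) = (r == 0).
Proof. by rewrite eq_complex /= eqxx andbT. Qed.

Section Bits.
Variable n : nat.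

Definition bits_add (x y : bits n) : bits n := [ffun i => x i (+) y i].

Lemma zerosP (x : bits n) : reflect (forall i, ~~ x i) (x == zeros n).
Proof.
apply: (iffP eqP) => [-> i|x0]; first by rewrite ffunE.
by apply/ffunP => i; rewrite ffunE; apply/negbTE.
Qed.

Lemma zerosPn (x : bits n) : reflect (exists i, x i) (x != zeros n).
Proof.
apply: (iffP idP) => [/zerosP x0|[i xi]]; last by apply/zerosP => /(_ i); rewrite xi.
by apply/existsP; apply: contra_notT x0 => /existsPn.
Qed.

Lemma hweight_set (A : {set 'I_n}) : hweight [ffun i => i \in A] = #|A|.
Proof. by apply: eq_card => i; rewrite !inE ffunE. Qed.

Lemma card_prefix m : (m <= n)%N -> #|[set i : 'I_n | (i < m)%N]| = m.
Proof.
move=> mn; rewrite -sum1dep_card -(big_mkord (fun i => i < m)%N (fun _ => 1%N)).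
by rewrite -(big_nat_widen 0 m n xpredT) // sum_nat_const_nat muln1 subn0.
Qed.

Lemma card_hweight k : #|[set x : bits n | hweight x == k]| = 'C(n, k).
Proof.
have := card_draws 'I_n k; rewrite card_ord => <-; rewrite -!sum1dep_card.
rewrite (reindex (fun A : {set 'I_n} => [ffun i => i \in A])) /=.
  apply: eq_bigl => A; rewrite /hweight; congr (_ == _).
  by apply: eq_card => i; rewrite !inE ffunE.
exists (fun x : bits n => [set i | x i]) => [A _|x _].
  by apply/setP => i; rewrite inE ffunE.
by apply/ffunP => i; rewrite ffunE inE.
Qed.

Lemma hweight_support_eq (x u : bits n) :
  (forall i, x i -> u i) -> (hweight u <= hweight x)%N -> u = x.
Proof.
move=> xu ux; have sub : [set i | x i] \subset [set i | u i].
  by apply/subsetP => i; rewrite !inE; apply: xu.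
have /eqP/setP eq_supp : [set i | x i] == [set i | u i] by rewrite eqEcard sub.
by apply/ffunP => i; have := eq_supp i; rewrite !inE.
Qed.

(* Take the first k - 1 qubits together with qubit k - 1, k or k + 1 respectively;
   the sum of the three is the first k + 2 qubits. *)
Lemma exists_weight_triple k : (2 <= k)%N -> (k + 2 <= n)%N ->
  exists x y z : bits n, [/\ hweight x = k, hweight y = k, hweight z = k
    & hweight (bits_add z (bits_add x y)) = k.+2].
Proof.
move=> k2 kn; pose T := [set i : 'I_n | (i < k.-1)%N].
have cT : #|T| = k.-1 by rewrite card_prefix //; lia.
have hw_add1 (a : 'I_n) : (k.-1 <= a)%N -> hweight [ffun i => i \in a |: T] = k.
  by move=> ka; rewrite hweight_set cardsU1 cT inE ltnNge ka /=; lia.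
have a_lt : (k.-1 < n)%N by lia.
have b_lt : (k < n)%N by lia.
have c_lt : (k.+1 < n)%N by lia.
exists [ffun i => i \in Ordinal a_lt |: T], [ffun i => i \in Ordinal b_lt |: T],
       [ffun i => i \in Ordinal c_lt |: T].
split; rewrite ?hw_add1 //=; [lia|lia|].
have k2n : (k.+2 <= n)%N by lia.
rewrite -[k.+2](card_prefix k2n) -hweight_set.
congr (hweight _); apply/ffunP => i; rewrite !ffunE !inE -!val_eqE /=.
by case: (val i =P k.+1); case: (val i =P k.-1); case: (val i =P k); case: ltnP => /=; lia.
Qed.

End Bits.

Section Operators.
Variables (R : realType) (n : nat).
Local Notation op := (op R n).

Definition mx_of_op (A : op) : 'M[R[i]]_#|bits n| :=
  \matrix_(i, j) A (enum_val i) (enum_val j).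

Lemma mx_of_op_inj : injective mx_of_op.
Proof.
move=> A B /matrixP eqAB.
apply: functional_extensionality => x; apply: functional_extensionality => y.
by have := eqAB (enum_rank x) (enum_rank y); rewrite !mxE !enum_rankK.
Qed.

Lemma mx_of_op_mul (A B : op) :
  mx_of_op (op_mul A B) = mx_of_op A *m mx_of_op B.
Proof.
apply/matrixP => i j; rewrite !mxE /op_mul (reindex (@enum_val (bits n) predT)) /=.
  by apply: eq_bigr => l _; rewrite !mxE.
exact/onW_bij/enum_val_bij.
Qed.

Lemma mx_of_op_id : mx_of_op (@op_id R n) = 1%:M.
Proof. by apply/matrixP => i j; rewrite !mxE /op_id (inj_eq enum_val_inj); case: eqP. Qed.

Lemma op_mulA : associative (@op_mul R n).
Proof. by move=> A B D; apply: mx_of_op_inj; rewrite !mx_of_op_mul mulmxA. Qed.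

Lemma op_mulr1 (A : op) : op_mul A (@op_id R n) = A.
Proof. by apply: mx_of_op_inj; rewrite mx_of_op_mul mx_of_op_id mulmx1. Qed.

Lemma op_mul1r (A : op) : op_mul (@op_id R n) A = A.
Proof. by apply: mx_of_op_inj; rewrite mx_of_op_mul mx_of_op_id mul1mx. Qed.

Lemma op_adj_id : op_adj (@op_id R n) = @op_id R n.
Proof.
apply: functional_extensionality => x; apply: functional_extensionality => y.
by rewrite /op_adj /op_id eq_sym; case: eqP; rewrite /cc ?conjc1 ?conjc0.
Qed.

Lemma unitary_adj_mul (U : op) : unitary U -> op_mul (op_adj U) U = @op_id R n.
Proof.
move=> UU; apply: mx_of_op_inj; rewrite mx_of_op_mul mx_of_op_id.
by apply: mulmx1C; rewrite -mx_of_op_mul UU mx_of_op_id.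
Qed.

Lemma clifford_id : clifford (@op_id R n).
Proof.
split; first by rewrite /unitary op_adj_id op_mulr1.
move=> p; exists p, 0; rewrite op_adj_id op_mulr1 op_mul1r.
apply: functional_extensionality => x; apply: functional_extensionality => y.
by rewrite expr0 mul1r.
Qed.

Lemma stab_polytope_zeros : stab_polytope (proj (@basis_ket R n (zeros n))).
Proof.
exists 1%N, (fun _ => 1), (fun _ => @op_id R n).
do 2!split=> //; first by rewrite big_ord1.
split=> [_|]; first exact: clifford_id.
apply: functional_extensionality => x; apply: functional_extensionality => y.
by rewrite big_ord1 mul1r.
Qed.

End Operators.

Section Pauli.
Variables (R : realType) (n : nat).
Local Notation op := (op R n).
Local Notation pstring := {ffun 'I_n -> 'I_4}.

Definition pauli_I : 'I_4 := Ordinal (isT : 0 < 4)%N.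
Definition pauli_Z : 'I_4 := Ordinal (isT : 3 < 4)%N.

Definition zstring (f : bits n) : pstring :=
  [ffun i => if f i then pauli_Z else pauli_I].

Definition pauli_flips (q : pstring) : bits n :=
  [ffun i => (val (q i) == 1)%N || (val (q i) == 2)%N].

Lemma pauli1_neq0 (p : 'I_4) a b :
  (pauli1 R p a b != 0) = ((a (+) b) == (val p == 1)%N || (val p == 2)%N).
Proof.
have iC0 : iC R != 0 by rewrite eq_complex /= oner_eq0 andbF.
case: p => [[|[|[|[|p]]]] Hp] //=; rewrite /pauli1 /=; case: a; case: b.
all: by rewrite ?oppr_eq0 ?oner_eq0 ?eqxx ?iC0.
Qed.

Lemma pauli_string_neq0 (q : pstring) a b :
  pauli_string R q a b != 0 -> bits_add a b = pauli_flips q.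
Proof.
move=> Pab; apply/ffunP => i; rewrite !ffunE; apply/eqP.
rewrite -pauli1_neq0; apply: contraNneq Pab => Pi.
by rewrite /pauli_string (bigD1 i) //= Pi mul0r.
Qed.

Lemma zstring_zeros (f : bits n) a :
  pauli_string R (zstring f) a (zeros n) = basis_ket (zeros n) a.
Proof.
rewrite /pauli_string /basis_ket; case: eqP => [->|/eqP/zerosPn [i ai]].
  by apply: big1 => i _; rewrite !ffunE; case: (f i).
by rewrite (bigD1 i) //= !ffunE ai; case: (f i); rewrite mul0r.
Qed.

Lemma sum_zstrings (a b : bits n) :
  \sum_f pauli_string R (zstring f) a b
  = 2 ^+ n * (basis_ket (zeros n) a * basis_ket (zeros n) b).
Proof.
rewrite /pauli_string; under eq_bigr do under eq_bigr do rewrite ffunE.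
rewrite -(bigA_distr_bigA (fun i (t : bool) =>
  pauli1 R (if t then pauli_Z else pauli_I) (a i) (b i))) /=.
have ZI i : pauli1 R pauli_Z (a i) (b i) + pauli1 R pauli_I (a i) (b i)
    = 2 * (if ~~ a i && ~~ b i then 1 else 0).
  by rewrite /pauli1 /=; case: (a i); case: (b i); rewrite /= ?mulr0 ?mulr1 ?addNr ?addr0.
under eq_bigr do rewrite big_bool /= ZI.
rewrite prodrMl card_ord; congr (_ * _); rewrite /basis_ket.
have [->|/zerosPn [i ai]] := eqVneq a (zeros n); last first.
  by rewrite mul0r (bigD1 i) //= ai mul0r.
have [->|/zerosPn [i bi]] := eqVneq b (zeros n); last first.
  by rewrite mulr0 (bigD1 i) //= bi andbF mul0r.
by rewrite mulr1 big1 // => i _; rewrite ffunE.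
Qed.

Lemma sum_conj_zstrings (U : op) (x y : bits n) :
  \sum_f op_mul (op_mul U (pauli_string R (zstring f))) (op_adj U) x y
  = 2 ^+ n * proj (stab_ket U) x y.
Proof.
rewrite /op_mul /op_adj /proj /stab_ket.
under eq_bigr do under eq_bigr do rewrite big_distrl /=.
rewrite exchange_big; under eq_bigr do rewrite exchange_big /=.
under eq_bigr do under eq_bigr do rewrite -big_distrl -mulr_sumr sum_zstrings /=.
rewrite (bigD1 (zeros n)) //= [X in _ + X]big1 ?addr0; last first.
  by move=> z z0; apply: big1 => a _; rewrite /basis_ket (negPf z0) !(mul0r, mulr0).
rewrite (bigD1 (zeros n)) //= [X in _ + X]big1 ?addr0; last first.
  by move=> a a0; rewrite /basis_ket (negPf a0) !(mul0r, mulr0).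
rewrite /basis_ket eqxx; ring.
Qed.

Lemma conj_zstring_stab_ket (U : op) (f : bits n) (z : bits n) : unitary U ->
  \sum_w op_mul (op_mul U (pauli_string R (zstring f))) (op_adj U) z w * stab_ket U w
  = stab_ket U z.
Proof.
move=> UU; set P := pauli_string R (zstring f).
change (op_mul (op_mul (op_mul U P) (op_adj U)) U z (zeros n) = U z (zeros n)).
rewrite -op_mulA unitary_adj_mul // op_mulr1 /op_mul /P.
by under eq_bigr do rewrite zstring_zeros; rewrite sumr_delta.
Qed.

Lemma clifford_stab_ket_add3 (U : op) (x y z : bits n) : clifford U ->
  stab_ket U x != 0 -> stab_ket U y != 0 -> stab_ket U z != 0 ->
  stab_ket U (bits_add z (bits_add x y)) != 0.
Proof.
move=> [UU UC] sx sy.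
pose G f := op_mul (op_mul U (pauli_string R (zstring f))) (op_adj U).
have [f Gxy] : exists f, G f x y != 0.
  have : 2 ^+ n * proj (stab_ket U) x y != 0.
    by rewrite mulf_neq0 ?expf_neq0 ?pnatr_eq0 // mulf_neq0 // conjc_eq0.
  rewrite -sum_conj_zstrings => sum_neq0; apply/existsP; rewrite -negb_forall.
  by apply: contra sum_neq0 => /forallP G0; rewrite big1 // => f _; exact/eqP/G0.
have [q [m Gq]] := UC (zstring f); rewrite -/(G f) in Gq.
have Qxy : pauli_string R q x y != 0.
  by apply: contraNneq Gxy; rewrite Gq => ->; rewrite mulr0.
(* [G f] fixes [stab_ket U] and, up to a phase, maps |w> to |w + x + y>. *)
rewrite -(conj_zstring_stab_ket f z UU) -/(G f) Gq; apply: contraNneq => s0.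
apply/eqP/big1 => w _; have [->|Qzw] := eqVneq (pauli_string R q z w) 0.
  by rewrite mulr0 mul0r.
suff -> : w = bits_add z (bits_add x y) by rewrite s0 mulr0.
have := pauli_string_neq0 Qzw; rewrite -(pauli_string_neq0 Qxy) => /ffunP zwxy.
by apply/ffunP => i; have := zwxy i; rewrite !ffunE => <-; case: (z i); case: (w i).
Qed.

End Pauli.

Section Mixtures.
Variables (R : realType) (n : nat) (I : finType).
Variables (w : I -> R) (s : I -> ket R n).
Hypothesis w_ge0 : forall j, 0 <= w j.

Definition mixture : op R n := fun x y => \sum_j cR (w j) * proj (s j) x y.

Lemma sum_weighted_norm_eq0 (F : I -> R[i]) :
  \sum_j cR (w j) * (F j * cc (F j)) = 0 -> forall j, w j != 0 -> F j = 0.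
Proof.
move=> sum0 j wj; apply/eqP.
have term_ge0 i : true -> 0 <= cR (w i) * (F i * cc (F i)).
  by move=> _; rewrite mulr_ge0 ?mulcJ_ge0 // /cR ler0c.
move/eqP: (psumr_eq0P term_ge0 sum0 (i := j) isT).
by rewrite !mulf_eq0 cR_eq0 (negPf wj) conjc_eq0 orbb.
Qed.

Lemma mixture_diag_eq0 z :
  mixture z z = 0 -> forall j, w j != 0 -> s j z = 0.
Proof. exact: sum_weighted_norm_eq0. Qed.

Lemma mixture_block_const x y :
  mixture x y = mixture x x -> mixture y x = mixture x x ->
  mixture y y = mixture x x -> forall j, w j != 0 -> s j x = s j y.
Proof.
move=> rxy ryx ryy j wj; apply/eqP; rewrite -subr_eq0; apply/eqP.
apply: (sum_weighted_norm_eq0 (F := fun j => s j x - s j y)) wj.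
transitivity (mixture x x - mixture x y - mixture y x + mixture y y).
  2: by rewrite rxy ryx ryy; ring.
rewrite /mixture -!sumrB -big_split /=; apply: eq_bigr => i _.
rewrite /proj /cc rmorphB /=; ring.
Qed.

Lemma mixture_diag_neq0 x :
  mixture x x != 0 -> exists2 j, w j != 0 & s j x != 0.
Proof.
move=> rxx; have [j /andP[wj sj]] : exists j, (w j != 0) && (s j x != 0).
  apply/existsP; apply: contraNT rxx; rewrite negb_exists => /forallP terms0.
  rewrite /mixture; apply/eqP/big1 => j _.
  have /nandP[/negPn/eqP->|/negPn/eqP sj] := terms0 j; first by rewrite mul0r.
  by rewrite /proj sj mul0r mulr0.
by exists j.
Qed.

End Mixtures.

Section AmplitudeDamping.
Variables (R : realType) (n : nat).
Implicit Types (g : R) (j x y u : bits n).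

Definition op_apply (A : op R n) (psi : ket R n) : ket R n :=
  fun x => \sum_u A x u * psi u.

Lemma ad_channel_n_proj g (psi : ket R n) x y :
  ad_channel_n g (proj psi) x y =
  \sum_j op_apply (ad_kraus_n g j) psi x * cc (op_apply (ad_kraus_n g j) psi y).
Proof.
apply: eq_bigr => j _; rewrite /op_apply /cc rmorph_sum big_distrl /=.
apply: eq_bigr => u _; rewrite big_distrr /=.
by apply: eq_bigr => v _; rewrite /proj rmorphM /=; ring.
Qed.

Lemma ad_kraus_n_neq0 g j x u (i : 'I_n) :
  ad_kraus_n g j x u != 0 -> ad_kraus g (j i) (x i) (u i) != 0.
Proof. by apply: contraNneq => K0; rewrite /ad_kraus_n (bigD1 i) //= K0 mul0r. Qed.

Lemma ad_kraus_n_support g j x u :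
  ad_kraus_n g j x u != 0 -> forall i, x i -> u i.
Proof.
move=> /ad_kraus_n_neq0 Kxu i xi; move: (Kxu i); rewrite /ad_kraus xi.
by case: (j i) (u i) => -[]; rewrite //= eqxx.
Qed.

Lemma ad_kraus_n_diag_neq0 g j x : ad_kraus_n g j x x != 0 -> j = zeros n.
Proof.
move=> /ad_kraus_n_neq0 Kxx; apply/eqP/zerosP => i; move: (Kxx i).
by rewrite /ad_kraus; case: (j i) (x i) => -[]; rewrite //= eqxx.
Qed.

Lemma ad_kraus_n_zeros_diag g x :
  ad_kraus_n g (zeros n) x x = cR (Num.sqrt (1 - g)) ^+ hweight x.
Proof.
rewrite /ad_kraus_n (bigID (fun i => x i)) /= [X in _ * X]big1 ?mulr1; last first.
  by move=> i /negPf xi; rewrite ffunE xi.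
rewrite (eq_bigr (fun _ => cR (Num.sqrt (1 - g)))) => [|i xi]; last by rewrite ffunE xi.
by rewrite prodr_const /hweight; congr (_ ^+ _); apply: eq_card => i; rewrite inE.
Qed.

Lemma ad_kraus_n_one j x u :
  ad_kraus_n (1 : R) j x u = if (x == zeros n) && (u == j) then 1 else 0.
Proof.
have [/andP[/eqP-> /eqP->]|] := boolP ((x == zeros n) && (u == j)).
  by apply: big1 => i _; rewrite ffunE /ad_kraus; case: (j i); rewrite /= ?sqrtr1.
move=> xu; apply/eqP; apply: contraNT xu => /ad_kraus_n_neq0 Kxu.
have Kxu_i i : ~~ x i && (u i == j i).
  move: (Kxu i); rewrite /ad_kraus; case: (j i) (x i) (u i) => -[] [] /=;
  by rewrite ?subrr ?sqrtr0 ?cR_eq0 ?eqxx.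
apply/andP; split; first by apply/zerosP => i; case/andP: (Kxu_i i).
by apply/eqP/ffunP => i; case/andP: (Kxu_i i) => _ /eqP.
Qed.

Definition damped_dicke_amp k g : R[i] :=
  cR (Num.sqrt (1 - g)) ^+ k * cR (Num.sqrt ('C(n, k)%:R^-1)).

Lemma op_apply_kraus_dicke k g j x : (k <= hweight x)%N ->
  op_apply (ad_kraus_n g j) (dicke R k) x
  = if (j == zeros n) && (hweight x == k) then damped_dicke_amp k g else 0.
Proof.
move=> kx; rewrite /op_apply (bigD1 x) //= big1 ?addr0; last first.
  move=> u ux; have [->|Kxu] := eqVneq (ad_kraus_n g j x u) 0; first by rewrite mul0r.
  rewrite /dicke; case: eqP => [uk|]; last by rewrite mulr0.
  by case/eqP: ux; apply: hweight_support_eq (ad_kraus_n_support Kxu) _; rewrite uk.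
have [->|j0] /= := eqVneq j (zeros n).
  rewrite ad_kraus_n_zeros_diag /dicke /damped_dicke_amp.
  by case: eqP => [->|]; rewrite ?mulr0.
have -> : ad_kraus_n g j x x = 0 by apply: contraNeq j0 => /ad_kraus_n_diag_neq0 ->.
by rewrite mul0r.
Qed.

Lemma rho_nk_weight_k k g x y : hweight x = k -> hweight y = k ->
  rho_nk n k g x y = damped_dicke_amp k g * cc (damped_dicke_amp k g).
Proof.
move=> xk yk; rewrite /rho_nk ad_channel_n_proj (bigD1 (zeros n)) //= big1 ?addr0.
  by rewrite !op_apply_kraus_dicke ?xk ?yk ?eqxx.
by move=> j j0; rewrite op_apply_kraus_dicke ?xk // (negPf j0) mul0r.
Qed.

Lemma rho_nk_overweight k g z : (k < hweight z)%N -> rho_nk n k g z z = 0.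
Proof.
move=> kz; rewrite /rho_nk ad_channel_n_proj big1 // => j _.
by rewrite op_apply_kraus_dicke ?(ltnW kz) // (gtn_eqF kz) andbF mul0r.
Qed.

Lemma damped_dicke_amp_neq0 k g : g < 1 -> (k <= n)%N -> damped_dicke_amp k g != 0.
Proof.
move=> g1 kn; rewrite mulf_neq0 ?expf_neq0 // cR_eq0 lt0r_neq0 // sqrtr_gt0.
  by rewrite subr_gt0.
by rewrite invr_gt0 ltr0n bin_gt0.
Qed.

Lemma ad_channel_n_one (psi : ket R n) :
  ad_channel_n 1 (proj psi) =
  fun x y => (\sum_u psi u * cc (psi u)) * proj (basis_ket (zeros n)) x y.
Proof.
apply: functional_extensionality => x; apply: functional_extensionality => y.
have apply_one j z : op_apply (ad_kraus_n 1 j) psi z = basis_ket (zeros n) z * psi j.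
  rewrite /op_apply /basis_ket; under eq_bigr do rewrite ad_kraus_n_one.
  case: eqP => _ /=; last by rewrite mul0r big1 // => u _; rewrite mul0r.
  rewrite mul1r (bigD1 j) //= eqxx mul1r big1 ?addr0 // => u /negPf ->.
  by rewrite mul0r.
rewrite ad_channel_n_proj mulr_suml; apply: eq_bigr => j _.
by rewrite !apply_one /proj /cc rmorphM /=; ring.
Qed.

Lemma dicke_norm k : (k <= n)%N ->
  \sum_(x : bits n) dicke R k x * cc (dicke R k x) = 1.
Proof.
move=> kn; set c := Num.sqrt ('C(n, k)%:R^-1 : R).
rewrite (bigID (fun x => hweight x == k)) /= [X in _ + X]big1 ?addr0; last first.
  by move=> x /negPf xk; rewrite /dicke xk mul0r.
rewrite (eq_bigr (fun _ => cR c * cc (cR c))) => [|x /eqP xk]; last by rewrite /dicke xk eqxx.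
rewrite sumr_const (_ : #|_| = 'C(n, k)); last first.
  by rewrite -card_hweight; apply: eq_card => x; rewrite !inE.
rewrite (_ : cR c = real_complex R c) // /cc conjc_real -rmorphM -rmorphMn -expr2.
rewrite sqr_sqrtr ?invr_ge0 ?ler0n // -mulr_natl mulfV ?rmorph1 //.
by rewrite pnatr_eq0 -lt0n bin_gt0.
Qed.

Lemma rho_nk_one k : (k <= n)%N -> rho_nk n k (1 : R) = proj (basis_ket (zeros n)).
Proof.
move=> kn; rewrite /rho_nk ad_channel_n_one dicke_norm //.
by apply: functional_extensionality => x; apply: functional_extensionality => y; rewrite mul1r.
Qed.

End AmplitudeDamping.

Theorem propositionS1 (R : realType) (n k : nat) :
  (4 <= n)%N -> (2 <= k)%N -> (k <= n - 2)%N ->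
  (forall g : R, 0 <= g -> g < 1 -> ~ stab_polytope (rho_nk n k g))
  /\ rho_nk n k (1 : R) = proj (basis_ket (zeros n))
  /\ stab_polytope (rho_nk n k (1 : R)).
Proof.
move=> n4 k2 kn; have kn' : (k <= n)%N by lia.
split; last by rewrite rho_nk_one //; split=> //; exact: stab_polytope_zeros.
(* The weights need not be normalised for the argument. *)
move=> g g0 g1 [m [w [U [w_ge0 [_ [UC rho_mix]]]]]].
pose s j := stab_ket (U j).
have {}rho_mix : rho_nk n k g = mixture w s by [].
have [|x [y [z [xk yk zk heavy]]]] := exists_weight_triple (n := n) k2; first lia.
have s_const j p : hweight p = k -> w j != 0 -> s j p = s j x.
  move=> pk wj; apply/esym/(mixture_block_const w_ge0 _ _ _ wj);
  by rewrite -rho_mix !rho_nk_weight_k.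
have [j wj sx] : exists2 j, w j != 0 & s j x != 0.
  apply: mixture_diag_neq0; rewrite -rho_mix rho_nk_weight_k //.
  by rewrite mulf_neq0 ?conjc_eq0 ?damped_dicke_amp_neq0.
have sy : s j y != 0 by rewrite s_const.
have sz : s j z != 0 by rewrite s_const.
have := clifford_stab_ket_add3 (UC j) sx sy sz; rewrite -/(s j).
rewrite (mixture_diag_eq0 w_ge0 _ wj) ?eqxx // -rho_mix.
by rewrite rho_nk_overweight // heavy.
Qed.
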